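(* Let $M_I$ be a prefactor system and $M$ a target for it, and let $M_{\bar I}$ be the resulting compactification (a prefactor system on $\bar I=I\cup\{top\}$). (1) If $M_I$ is stable and $M$ is maximal over $M_I$, then $M_{\bar I}$ is stable. (2) If $M_I$ is direct and $M$ is extensional over $M_I$, then $M_{\bar I}$ is direct, and for every $a\in M$ the set $I_a$ contains a non-empty upward closed subset of $I$. (3) If $M_I$ is inverse and $M$ is maximal over $M_I$, then $M_{\bar I}$ is inverse, and $I_a=I$ for every $a\in M$.
   Context: Let $(I,\le)$ be a non-empty directed preordered set and $\mathcal F(I)$ a family of subsets of $I$, each cofinal in $I$, closed under supersets and finite intersections, and containing all non-empty upward closed subsets. A system $(M_I,\triangleright)$: sets $M_i$ ($i\in I$, pairwise disjoint) with relations $\triangleright\subseteq M_{i'}\times M_i$ for $i\le i'$, reflexive for $i=i'$. $a_i\approx b_j$ iff some $c\in M_{i'}$, $i'\ge i,j$, has $c\triangleright a_i$ and $c\triangleright b_j$. Prefactor system: $a_{i'}\approx a_i\iff a_{i'}\triangleright a_i$ for $i\le i'$. Stable: $a_{i'}\triangleright a_i\approx b_i$ implies $a_{i'}\triangleright b_i$. $\approx$-embeddings: $\approx$-preserving maps $emb_{i,i'}:M_i\to M_{i'}$ with $emb_{i,i}(a)\approx a$, $emb_{i',i''}(emb_{i,i'}(a))\approx emb_{i,i''}(a)$; coherent if $a_{i'}\triangleright a_i\Rightarrow emb_{i',i''}(a_{i'})\triangleright a_i$ ($i\le i'\le i''$). $\approx$-projections: $\approx$-preserving maps $proj_{i',i}:M_{i'}\to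 M_i$ with $proj_{i,i}(a)\approx a$, $proj_{i',i}(proj_{i'',i'}(a))\approx proj_{i'',i}(a)$; coherent if $a_{i''}\triangleright a_i\Rightarrow proj_{i'',i'}(a_{i''})\triangleright a_i$. Direct: prefactor system with coherent $\approx$-embeddings such that $a_{i'}\triangleright a_i\iff a_{i'}\approx emb_{i,i'}(a_i)$. Inverse: prefactor system with coherent $\approx$-projections such that $a_{i'}\triangleright a_i\iff proj_{i',i}(a_{i'})\approx a_i$ (these notions make sense for any index set, in particular for $\bar I$). Target and compactification: a target for $M_I$ is a set $M$ with a relation $a\triangleright a_i$ between $a\in M$ and elements $a_i\in M_i$, such that $I_a:=\{i\in I\mid\exists a_i\in M_i,\ a\triangleright a_i\}\in\mathcal F(I)$ for all $a\in M$, and such that the compactification $M_{\bar I}$ — index set $\bar I=I\cup\{top\}$ with $top$ a new greatest element, $M_{top}=M$, the relation $\triangleright$ on $M\times M$ being equality — is again a prefactor system, i.e. $a\triangleright a_{i'}$ and $a\triangleright a_i$ imply $a_{i'}\triangleright a_i$ ($i\le i'$). If $M_I$ carries embeddings (resp. projections), the target additionally carries maps $Emb_i=emb_{i,top}:M_i\to M$ (resp. $Proj_i=proj_{top,i}:M\to M_i$) making $M_{\bar I}$ a prefactor system with coherent $\approx$-embeddings (resp. projections) extending those of $M_I$; in particular $Emb_{i'}(emb_{i,i'}(a_i))=Emb_i(a_i)$ and $a_{i'}\triangleright a_i\Rightarrow Emb_{i'}(a_{i'})\triangleright a_i$, resp. $proj_{i',i}(Proj_{i'}(a))\approx Proj_i(a)$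 and $a\triangleright a_i\Rightarrow Proj_{i'}(a)\triangleright a_i$ ($i\le i'$); here $Proj_i(a)$ may be taken as $proj_{i',i}(a_{i'})$ for any $i'\ge i$ with $a\triangleright a_{i'}$. A consistent set is $\alpha\subseteq\bigcup_iM_i$ with $a_{i'}\triangleright a_i$ for all its elements $a_{i'}\in M_{i'}$, $a_i\in M_i$, $i'\ge i$, and $\{i\mid\alpha\cap M_i\ne\emptyset\}\in\mathcal F(I)$. For $a\in M$, $Ext(a):=\{a_i\in\bigcup_iM_i\mid a\triangleright a_i\}$ (a consistent set). Two consistent sets $\alpha,\beta$ satisfy $\alpha\sim\beta$ iff $a_i\approx b_j$ for all $a_i\in\alpha$, $b_j\in\beta$. $M$ is maximal over $M_I$ iff $Ext(a)$ is an inclusion-maximal consistent set for every $a\in M$; $M$ is extensional over $M_I$ iff $Ext(a)\sim Ext(b)$ implies $a=b$. *)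

(** A system is a family of types [M j] (disjointness is automatic for a
    dependent family) with relations [R j' j : M j' -> M j -> Prop]
    (the relation |> , only ever used when [le j j']). *)
Section Generic.
Context {J : Type} (le : J -> J -> Prop) {M : J -> Type}
        (R : forall j' j, M j' -> M j -> Prop).

Definition is_system : Prop := forall j (a : M j), R j j a a.

Definition approx {i j} (a : M i) (b : M j) : Prop :=
  exists k, le i k /\ le j k /\ exists c : M k, R k i c a /\ R k j c b.

Definition prefactor : Prop :=
  forall i i', le i i' -> forall (a' : M i') (a : M i), approx a' a <-> R i' i a' a.

Definition stable : Prop :=
  forall i i', le i i' -> forall (a' : M i') (a b : M i),
    R i' i a' a -> approx a b -> R i' i a' b.

Definition is_emb (emb : forall i i', le i i' -> M i -> M i') : Prop :=
  (forall i i' (h : le i i') (a b : M i), approx a b -> approx (emb i i' h a) (emb i i' h b)) /\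
  (forall i (h : le i i) (a : M i), approx (emb i i h a) a) /\
  (forall i i' i'' (h1 : le i i') (h2 : le i' i'') (h3 : le i i'') (a : M i),
      approx (emb i' i'' h2 (emb i i' h1 a)) (emb i i'' h3 a)).

Definition coherent_emb (emb : forall i i', le i i' -> M i -> M i') : Prop :=
  forall i i' i'' (h1 : le i i') (h2 : le i' i'') (a' : M i') (a : M i),
    R i' i a' a -> R i'' i (emb i' i'' h2 a') a.

Definition direct_wrt (emb : forall i i', le i i' -> M i -> M i') : Prop :=
  prefactor /\ is_emb emb /\ coherent_emb emb /\
  (forall i i' (h : le i i') (a' : M i') (a : M i), R i' i a' a <-> approx a' (emb i i' h a)).

Definition is_proj (proj : forall i i', le i i' -> M i' -> M i) : Prop :=
  (forall i i' (h : le i i') (a b : M i'), approx a b -> approx (proj i i' h a) (proj i i' h b)) /\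
  (forall i (h : le i i) (a : M i), approx (proj i i h a) a) /\
  (forall i i' i'' (h1 : le i i') (h2 : le i' i'') (h3 : le i i'') (a : M i''),
      approx (proj i i' h1 (proj i' i'' h2 a)) (proj i i'' h3 a)).

Definition coherent_proj (proj : forall i i', le i i' -> M i' -> M i) : Prop :=
  forall i i' i'' (h1 : le i i') (h2 : le i' i'') (a'' : M i'') (a : M i),
    R i'' i a'' a -> R i' i (proj i' i'' h2 a'') a.

Definition inverse_wrt (proj : forall i i', le i i' -> M i' -> M i) : Prop :=
  prefactor /\ is_proj proj /\ coherent_proj proj /\
  (forall i i' (h : le i i') (a' : M i') (a : M i), R i' i a' a <-> approx (proj i i' h a') a).

End Generic.

Definition upward_closed {I : Type} (le : I -> I -> Prop) (S : I -> Prop) : Prop :=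
  forall i j, S i -> le i j -> S j.

Definition index_setting {I : Type} (le : I -> I -> Prop) (F : (I -> Prop) -> Prop) : Prop :=
  (forall i, le i i) /\ (forall i j k, le i j -> le j k -> le i k) /\
  inhabited I /\ (forall i j, exists k, le i k /\ le j k) /\
  (forall S, F S -> forall i, exists j, le i j /\ S j) /\
  (forall S S', F S -> (forall i, S i -> S' i) -> F S') /\
  (forall S S', F S -> F S' -> F (fun i => S i /\ S' i)) /\
  (forall S, (exists i, S i) -> upward_closed le S -> F S).

(** * The compactification  I-bar = I + {top}  (top = None) *)
Section Compactification.
Context {I : Type} (le : I -> I -> Prop) {M : I -> Type}
        (R : forall i' i, M i' -> M i -> Prop)
        {T : Type} (RT : forall i, T -> M i -> Prop).

Definition le_bar (j j' : option I) : Prop :=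
  match j, j' with
  | Some i, Some i' => le i i'
  | _, None => True
  | None, Some _ => False
  end.

Definition M_bar (j : option I) : Type :=
  match j with Some i => M i | None => T end.

Definition R_bar (j' j : option I) : M_bar j' -> M_bar j -> Prop :=
  match j', j return M_bar j' -> M_bar j -> Prop with
  | Some i', Some i => R i' i
  | None, Some i => RT i
  | None, None => fun a b => a = b
  | Some _, None => fun _ _ => False
  end.

Definition emb_bar (emb : forall i i', le i i' -> M i -> M i')
  (Emb : forall i, M i -> T) (j j' : option I) : le_bar j j' -> M_bar j -> M_bar j' :=
  match j, j' return le_bar j j' -> M_bar j -> M_bar j' with
  | Some i, Some i' => fun h a => emb i i' h a
  | Some i, None => fun _ a => Emb i a
  | None, None => fun _ a => a
  | None, Some _ => fun h _ => match h with end
  end.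

Definition proj_bar (proj : forall i i', le i i' -> M i' -> M i)
  (Proj : forall i, T -> M i) (j j' : option I) : le_bar j j' -> M_bar j' -> M_bar j :=
  match j, j' return le_bar j j' -> M_bar j' -> M_bar j with
  | Some i, Some i' => fun h a => proj i i' h a
  | Some i, None => fun _ a => Proj i a
  | None, None => fun _ a => a
  | None, Some _ => fun h _ => match h with end
  end.

Definition I_of (a : T) (i : I) : Prop := exists x : M i, RT i a x.

Definition is_target (F : (I -> Prop) -> Prop) : Prop :=
  (forall a, F (I_of a)) /\ prefactor le_bar R_bar.

Definition target_emb emb Emb : Prop :=
  is_emb le_bar R_bar (emb_bar emb Emb) /\ coherent_emb le_bar R_bar (emb_bar emb Emb).

Definition target_proj proj Proj : Prop :=
  is_proj le_bar R_bar (proj_bar proj Proj) /\ coherent_proj le_bar R_bar (proj_bar proj Proj).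

(** consistent sets: alpha is a predicate on the disjoint union *)
Definition consistent (F : (I -> Prop) -> Prop) (alpha : forall i, M i -> Prop) : Prop :=
  (forall i i', le i i' -> forall (a' : M i') (a : M i), alpha i' a' -> alpha i a -> R i' i a' a) /\
  F (fun i => exists a, alpha i a).

Definition Ext (a : T) : forall i, M i -> Prop := fun i x => RT i a x.

Definition sim (alpha beta : forall i, M i -> Prop) : Prop :=
  forall i j (a : M i) (b : M j), alpha i a -> beta j b -> approx le R a b.

Definition maximal (F : (I -> Prop) -> Prop) : Prop :=
  forall a, consistent F (Ext a) /\
    forall beta, consistent F beta -> (forall i x, Ext a i x -> beta i x) ->
      forall i x, beta i x -> Ext a i x.

Definition extensional : Prop :=
  forall a b, sim (Ext a) (Ext b) -> a = b.

End Compactification.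

From Stdlib Require Import Setoid.

(* Passing to the compactification does not change ~ between elements of
   M_I: a common bound c in M can be traded for an element of Ext c at a
   higher level, since I_c is cofinal and Ext c is consistent.  Maximality of
   M means that Ext a absorbs every element that is ~-related to all of
   Ext a; this yields stability of the compactification and, for inverse
   systems, puts Proj_i a into Ext a for every i.  In a direct system, if a
   and b both extend a_i then Ext a ~ Ext b (push elements of both up to a
   common level with the embeddings, where they all lie above a_i), so
   extensionality forces a = Emb_i a_i whenever a |> a_i. *)

Section PrefactorSystem.
Context {J : Type} {le : J -> J -> Prop} {M : J -> Type}
        {R : forall j' j, M j' -> M j -> Prop}.
Hypothesis le_refl : forall j, le j j.
Hypothesis Hsys : is_system R.
Hypothesis Hpre : prefactor le R.

Lemma approx_sym {i j} {a : M i} {b : M j} : approx le R a b -> approx le R b a.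
Proof. intros (k & hik & hjk & c & hca & hcb). exists k; eauto 6. Qed.

Lemma R_same_iff_approx {j} {u v : M j} : R j j u v <-> approx le R u v.
Proof. symmetry. exact (Hpre j j (le_refl j) u v). Qed.

Lemma R_same_trans_l {j l} (hl : le l j) {w e : M j} {y : M l} :
  R j j w e -> R j l w y -> R j l e y.
Proof.
  intros hwe hwy. apply (Hpre l j hl). exists j; split; [apply le_refl|split; [exact hl|]].
  exists w; auto.
Qed.

Lemma R_same_sym {j} {u v : M j} : R j j u v -> R j j v u.
Proof. intros h. apply (R_same_trans_l (le_refl j) h), Hsys. Qed.

Lemma R_same_trans {j} {u v w : M j} : R j j u v -> R j j v w -> R j j u w.
Proof. intros huv hvw. exact (R_same_trans_l (le_refl j) (R_same_sym huv) hvw). Qed.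

Lemma direct_R_same {emb} (Hd : direct_wrt le R emb) {i q} (hiq : le i q) {a : M i} {e w : M q} :
  R q i e a -> R q i w a -> R q q w e.
Proof.
  destruct Hd as (_ & _ & _ & Hchar). intros hea hwa.
  apply (Hchar i q hiq), R_same_iff_approx in hea.
  apply (Hchar i q hiq), R_same_iff_approx in hwa.
  exact (R_same_trans hwa (R_same_sym hea)).
Qed.

Lemma direct_R_emb {emb} (Hd : direct_wrt le R emb) {i j} (hij : le i j) (a : M i) :
  R j i (emb i j hij a) a.
Proof.
  destruct Hd as (_ & _ & _ & Hchar). apply (Hchar i j hij), R_same_iff_approx, Hsys.
Qed.

End PrefactorSystem.

Section Compactification.
Context {I : Type} (le : I -> I -> Prop) (F : (I -> Prop) -> Prop) {M : I -> Type}
        (R : forall i' i, M i' -> M i -> Prop) {T : Type} (RT : forall i, T -> M i -> Prop).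
Hypothesis le_refl : forall i, le i i.
Hypothesis le_trans : forall i j k, le i j -> le j k -> le i k.
Hypothesis le_directed : forall i j, exists k, le i k /\ le j k.
Hypothesis F_cofinal : forall S, F S -> forall i, exists j, le i j /\ S j.
Hypothesis F_superset : forall S S', F S -> (forall i, S i -> S' i) -> F S'.
Hypothesis Hsys : is_system R.
Hypothesis Hpre : prefactor le R.
Hypothesis I_of_F : forall a, F (I_of RT a).
Hypothesis Hpre_bar : prefactor (le_bar le) (R_bar R RT).

Lemma RT_cofinal (c : T) i : exists j (x : M j), le i j /\ RT j c x.
Proof.
  destruct (F_cofinal _ (I_of_F c) i) as (j & hij & x & hx). exists j, x; auto.
Qed.

Lemma RT_R {c : T} {k m} (hkm : le k m) {x : M k} {y : M m} :
  RT m c y -> RT k c x -> R m k y x.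
Proof.
  intros hy hx. apply (Hpre_bar (Some k) (Some m) hkm y x).
  exists None; simpl; split; [exact Logic.I|split; [exact Logic.I|]]. exists c; auto.
Qed.

Lemma approx_bar_some {i j} {a : M i} {b : M j} :
  approx (le_bar le) (R_bar R RT) (i := Some i) (j := Some j) a b <-> approx le R a b.
Proof.
  split.
  - intros ([k|] & hik & hjk & c & hca & hcb); simpl in *.
    + exists k; eauto.
    + destruct (le_directed i j) as (u & hiu & hju).
      destruct (RT_cofinal c u) as (m & x & hum & hx).
      exists m; split; [eauto|split; [eauto|]].
      exists x; split; eapply RT_R; eauto.
  - intros (k & hik & hjk & c & hca & hcb). exists (Some k); simpl; eauto.
Qed.

Lemma approx_bar_top {a b : T} :
  approx (le_bar le) (R_bar R RT) (i := None) (j := None) a b <-> a = b.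
Proof.
  split.
  - intros ([k|] & _ & _ & c & hca & hcb); simpl in *; [contradiction|congruence].
  - intros <-. exists None; simpl; eauto.
Qed.

Lemma maximal_extend (Hmax : maximal le R RT F) (c : T) i0 (a0 : M i0) :
  (forall k (x : M k), RT k c x -> approx le R a0 x) -> RT i0 c a0.
Proof.
  intros Ha0. destruct (Hmax c) as [[Hcons HF] Hmaxc].
  (* Ext c with a0 adjoined; membership of a0 is stated via a transport along
     i0 = k, as the levels are types of a dependent family. *)
  set (beta := fun k (x : M k) => RT k c x \/ exists e : i0 = k, eq_rect i0 M a0 k e = x).
  apply (Hmaxc beta); [split| |right; exists eq_refl; reflexivity].
  - intros i i' hii' x' x [h'|[e' <-]] [h|[e <-]]; subst; simpl.
    + exact (Hcons i i' hii' x' x h' h).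
    + apply (Hpre _ _ hii'), approx_sym, Ha0; exact h'.
    + apply (Hpre _ _ hii'), Ha0; exact h.
    + apply Hsys.
  - apply (F_superset _ _ HF). intros i [x hx]. exists x; left; exact hx.
  - intros i x hx; left; exact hx.
Qed.

Lemma compactification_stable (Hst : stable le R) (Hmax : maximal le R RT F) :
  stable (le_bar le) (R_bar R RT).
Proof.
  intros [i|] [i'|] hii' a' a b; simpl in *; try contradiction.
  - intros h' hab. apply approx_bar_some in hab. exact (Hst i i' hii' a' a b h' hab).
  - intros h' hab. apply approx_bar_some in hab. apply (maximal_extend Hmax).
    intros k x hx.
    destruct (le_directed i k) as (u & hiu & hku).
    destruct (RT_cofinal a' u) as (p & z & hup & hz).
    exists p; split; [eauto|split; [eauto|]]. exists z; split.
    + apply (Hst i p (le_trans _ _ _ hiu hup) z a b); [eapply RT_R|]; eauto.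
    + eapply RT_R; eauto.
  - intros -> hab. apply approx_bar_top in hab. exact hab.
Qed.

Section Direct.
Variables (emb : forall i i', le i i' -> M i -> M i') (Emb : forall i, M i -> T).
Hypothesis Hdir : direct_wrt le R emb.
Hypothesis Htemb : target_emb le R RT emb Emb.
Hypothesis Hext : extensional le R RT.

Lemma RT_functional c d i (a : M i) : RT i c a -> RT i d a -> c = d.
Proof.
  intros hc hd. apply Hext. intros k l x y hx hy. unfold Ext in hx, hy.
  destruct (le_directed k l) as (u0 & hku0 & hlu0).
  destruct (le_directed u0 i) as (u & hu0u & hiu).
  destruct (RT_cofinal c u) as (p & z & hup & hz).
  destruct (RT_cofinal d p) as (q & w & hpq & hw).
  assert (hkp : le k p) by eauto.
  assert (hip : le i p) by eauto.
  assert (hlq : le l q) by eauto.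
  assert (hiq : le i q) by eauto.
  destruct Hdir as (_ & _ & Hcoh & _).
  set (e := emb p q hpq z).
  assert (hea : R q i e a) by (eapply Hcoh, RT_R; eauto).
  pose proof (direct_R_same le_refl Hsys Hpre Hdir hiq hea (RT_R hiq hw hd)) as hwe.
  exists q; split; [eauto|split; [exact hlq|]]. exists e; split.
  - eapply Hcoh, RT_R; eauto.
  - exact (R_same_trans_l le_refl Hpre hlq hwe (RT_R hlq hw hy)).
Qed.

Lemma RT_Emb i (a : M i) : RT i (Emb i a) a.
Proof.
  exact (proj2 Htemb (Some i) (Some i) None (le_refl i) Logic.I a a (Hsys i a)).
Qed.

Lemma RT_iff_Emb i (c : T) (a : M i) : RT i c a <-> c = Emb i a.
Proof.
  split; [intros h; exact (RT_functional c _ i a h (RT_Emb i a))|intros ->; apply RT_Emb].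
Qed.

Lemma RT_emb (c : T) i j (hij : le i j) (a : M i) : RT i c a -> RT j c (emb i j hij a).
Proof.
  intros hca. enough (c = Emb j (emb i j hij a)) as -> by apply RT_Emb.
  apply (RT_functional _ _ i a hca).
  exact (proj2 Htemb (Some i) (Some j) None hij Logic.I _ _
           (direct_R_emb le_refl Hsys Hpre Hdir hij a)).
Qed.

Lemma compactification_direct : direct_wrt (le_bar le) (R_bar R RT) (emb_bar le emb Emb).
Proof.
  destruct Hdir as (_ & _ & _ & Hchar).
  split; [exact Hpre_bar|split; [apply Htemb|split; [apply Htemb|]]].
  intros [i|] [i'|] hii' a' a; simpl in *; try contradiction.
  - rewrite approx_bar_some. apply Hchar.
  - rewrite approx_bar_top. apply RT_iff_Emb.
  - rewrite approx_bar_top. reflexivity.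
Qed.

End Direct.

Section Inverse.
Variables (proj : forall i i', le i i' -> M i' -> M i) (Proj : forall i, T -> M i).
Hypothesis Hinv : inverse_wrt le R proj.
Hypothesis Htproj : target_proj le R RT proj Proj.
Hypothesis Hmax : maximal le R RT F.

Lemma RT_iff_Proj i (c : T) (a : M i) : RT i c a <-> R i i (Proj i c) a.
Proof.
  destruct Hinv as (_ & _ & _ & Hchar). destruct Htproj as [(_ & _ & Hcomp) Hcoh].
  split.
  - exact (Hcoh (Some i) (Some i) None (le_refl i) Logic.I c a).
  - intros hPa. apply (maximal_extend Hmax). intros k x hx.
    destruct (le_directed i k) as (m & him & hkm).
    exists m; split; [exact him|split; [exact hkm|]]. exists (Proj m c); split.
    + apply (Hchar i m him), (R_same_iff_approx le_refl Hpre).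
      refine (R_same_trans le_refl Hsys Hpre _ hPa).
      apply (R_same_iff_approx le_refl Hpre), approx_bar_some.
      exact (Hcomp (Some i) (Some m) None him Logic.I Logic.I c).
    + exact (Hcoh (Some k) (Some m) None hkm Logic.I c x hx).
Qed.

Lemma compactification_inverse : inverse_wrt (le_bar le) (R_bar R RT) (proj_bar le proj Proj).
Proof.
  destruct Hinv as (_ & _ & _ & Hchar).
  split; [exact Hpre_bar|split; [apply Htproj|split; [apply Htproj|]]].
  intros [i|] [i'|] hii' a' a; simpl in *; try contradiction.
  - rewrite approx_bar_some. apply Hchar.
  - rewrite approx_bar_some, <- (R_same_iff_approx le_refl Hpre). apply RT_iff_Proj.
  - rewrite approx_bar_top. reflexivity.
Qed.

Lemma I_of_full (c : T) i : I_of RT c i.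
Proof. exists (Proj i c). apply RT_iff_Proj, Hsys. Qed.

End Inverse.
End Compactification.

Theorem proposition2p11 (I : Type) (le : I -> I -> Prop) (F : (I -> Prop) -> Prop)
  (M : I -> Type) (R : forall i' i, M i' -> M i -> Prop)
  (T : Type) (RT : forall i, T -> M i -> Prop) :
  index_setting le F ->
  is_system R -> prefactor le R ->
  is_target le R RT F ->
  (* (1) *)
  (stable le R -> maximal le R RT F ->
     stable (le_bar le) (R_bar R RT)) /\
  (* (2) *)
  (forall (emb : forall i i', le i i' -> M i -> M i') (Emb : forall i, M i -> T),
     direct_wrt le R emb -> target_emb le R RT emb Emb -> extensional le R RT ->
     direct_wrt (le_bar le) (R_bar R RT) (emb_bar le emb Emb) /\
     (forall a : T, exists S : I -> Prop,
        (exists i, S i) /\ upward_closed le S /\ (forall i, S i -> I_of RT a i))) /\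
  (* (3) *)
  (forall (proj : forall i i', le i i' -> M i' -> M i) (Proj : forall i, T -> M i),
     inverse_wrt le R proj -> target_proj le R RT proj Proj -> maximal le R RT F ->
     inverse_wrt (le_bar le) (R_bar R RT) (proj_bar le proj Proj) /\
     (forall (a : T) (i : I), I_of RT a i)).
Proof.
  intros (le_refl & le_trans & [i0] & le_directed & F_cofinal & F_superset & _ & _)
    Hsys Hpre [I_of_F Hpre_bar].
  split; [|split].
  - intros Hst Hmax. eapply compactification_stable; eassumption.
  - intros emb Emb Hdir Htemb Hext. split; [eapply compactification_direct; eassumption|].
    intros a. destruct (RT_cofinal le F RT F_cofinal I_of_F a i0) as (i & x & _ & hx).
    exists (le i). split; [exists i; apply le_refl|split].
    + intros j k hij hjk. eauto.
    + intros j hij. exists (emb i j hij x). eapply RT_emb; eassumption.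
  - intros proj Proj Hinv Htproj Hmax.
    split; [eapply compactification_inverse|intros a i; eapply I_of_full]; eassumption.
Qed.
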